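(* The Lie algebra of the Lie group $(\delta+\mathbb{K}^m\langle\langle X\rangle\rangle,\circ,\delta)$ (Fréchet topology) is the space $\mathbb{K}^m\langle\langle X\rangle\rangle$ with Lie bracket $$[c,d]=c\lhd d-d\lhd c.$$
   Context: $\mathbb{K}\in\{\mathbb{R},\mathbb{C}\}$. $X=\{x_0,x_1,\ldots,x_m\}$ is a finite alphabet, $X^\ast$ its words (including $\emptyset$). $\mathbb{K}^m\langle\langle X\rangle\rangle$ is the space of maps $X^\ast\to\mathbb{K}^m$ with the Fréchet (product) topology; $d[i]$ denotes the $i$-th component series of $d$. $\delta$ is a formal symbol and $\delta+\mathbb{K}^m\langle\langle X\rangle\rangle=\{\delta+c\}$ is an affine space modelled on $\mathbb{K}^m\langle\langle X\rangle\rangle$. The shuffle product $\sqcup\!\sqcup$ is determined on words by $(x_i\eta)\sqcup\!\sqcup(x_j\xi)=x_i(\eta\sqcup\!\sqcup(x_j\xi))+x_j((x_i\eta)\sqcup\!\sqcup\xi)$, $\eta\sqcup\!\sqcup\emptyset=\emptyset\sqcup\!\sqcup\eta=\eta$. Mixed composition: with $d[0]:=0$, $\phi_d(\emptyset)=\mathrm{id}$, $\phi_d(x_i\eta)=\phi_d(x_i)\circ\phi_d(\eta)$, $\phi_d(x_i)(e)=x_ie+x_0(d[i]\sqcup\!\sqcup e)$, $c\,\tilde\circ\,d_\delta=\sum_\eta(c,\eta)\phi_d(\eta)(1\cdot\emptyset)$; group product $(\delta+c)\circ(\delta+d)=\delta+d+c\,\tilde\circ\,d_\delta$, identity $\delta$;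 this is an analytic Lie group. Pre-Lie product: $c\lhd d=\sum_{\eta}(c,\eta)\,\eta\lhd d$, where $\emptyset\lhd d=0$, $(x_0\eta)\lhd d=x_0(\eta\lhd d)$, and $(x_j\eta)\lhd d=x_j(\eta\lhd d)+x_0(\eta\sqcup\!\sqcup d[j])$ for $j=1,\ldots,m$ (products of elements of $\mathbb{K}^m$ taken componentwise). The Lie algebra is $T_\delta$ of the group with bracket obtained by evaluating at $\delta$ the bracket of left-invariant vector fields. *)

From HB Require Import structures.
From mathcomp Require Import all_boot all_order all_algebra.
From mathcomp Require Import all_classical all_reals topology normedtype.
Set Implicit Arguments. Unset Strict Implicit. Unset Printing Implicit Defensive.
Import Order.TTheory GRing.Theory Num.Theory.
Import numFieldNormedType.Exports.
Local Open Scope ring_scope.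
Local Open Scope classical_set_scope.

Section Series.
Variables (K : numFieldType) (m : nat).

(* Alphabet X = {x_0,...,x_m} is 'I_m.+1; x_0 = ord0, x_j = lift ord0 (j-1). *)
Definition word := seq 'I_m.+1.
Definition sser := word -> K.
(* K^m<<X>> : component series indexed by 'I_m (component i is d[i+1]). *)
Definition ser := word -> 'I_m -> K.

Definition x0 : 'I_m.+1 := ord0.

Definition sadd (a b : ser) : ser := fun w i => a w i + b w i.
Definition ssub (a b : ser) : ser := fun w i => a w i - b w i.
Definition sscale (t : K) (a : ser) : ser := fun w i => t * a w i.
Definition szero : ser := fun _ _ => 0.
Definition ssadd (a b : sser) : sser := fun w => a w + b w.

Definition sumwords (n : nat) (F : word -> K) : K :=
  \sum_(k < n.+1) \sum_(u : k.-tuple 'I_m.+1) F (val u).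

(* shuffle of words, as a list with multiplicities *)
Fixpoint shw (u : word) : word -> seq word :=
  match u with
  | [::] => fun v => [:: v]
  | a :: u' =>
      fix shv (v : word) : seq word :=
        match v with
        | [::] => [:: u]
        | b :: v' => map (cons a) (shw u' v) ++ map (cons b) (shv v')
        end
  end.

Definition shuffle (a b : sser) : sser := fun w =>
  \sum_(k < (size w).+1) \sum_(u : k.-tuple 'I_m.+1)
     \sum_(v : (size w - k).-tuple 'I_m.+1)
        a (val u) * b (val v) * (count_mem w (shw (val u) (val v)))%:R.

Definition wser (u : word) : sser := fun w => (w == u)%:R.
Definition sone : sser := wser [::].

Definition pre (a : 'I_m.+1) (e : sser) : sser := fun w =>
  if w is b :: w' then (if b == a then e w' else 0) else 0.

(* d[a] for a letter a, with d[0] := 0 *)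
Definition dcomp (d : ser) (a : 'I_m.+1) : sser := fun w =>
  match unlift ord0 a with Some i => d w i | None => 0 end.

Definition phi_letter (d : ser) (a : 'I_m.+1) (e : sser) : sser :=
  ssadd (pre a e) (pre x0 (shuffle (dcomp d a) e)).

Definition phi (d : ser) (eta : word) (e : sser) : sser :=
  foldr (phi_letter d) e eta.

(* mixed composition c ~o d_delta = sum_eta (c,eta) phi_d(eta)(1.empty);
   only words eta with |eta| <= |w| contribute to the coefficient of w. *)
Definition mixcomp (c d : ser) : ser := fun w i =>
  sumwords (size w) (fun eta => c eta i * phi d eta sone w).

(* group product in the affine chart: (delta + c) o (delta + d) = delta + mul c d *)
Definition gmul (c d : ser) : ser := sadd d (mixcomp c d).

Fixpoint wprelie (d : ser) (eta : word) : sser :=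
  match eta with
  | [::] => fun _ => 0
  | a :: eta' =>
      ssadd (pre a (wprelie d eta')) (pre x0 (shuffle (wser eta') (dcomp d a)))
  end.

(* c <| d = sum_eta (c,eta) (eta <| d); only |eta| <= |w| contribute *)
Definition prelie (c d : ser) : ser := fun w i =>
  sumwords (size w) (fun eta => c eta i * wprelie d eta w).

(* Directional derivative of F : K^m<<X>> -> K^m<<X>> at x in direction v,
   for the Frechet (product) topology, i.e. coefficientwise convergence. *)
Definition dirderiv (F : ser -> ser) (x v l : ser) : Prop :=
  forall w i,
    (fun t : K => (F (sadd x (sscale t v)) w i - F x w i) / t) @ 0^' --> l w i.

(* X is the left-invariant vector field with value v at delta, in the chart
   g = delta + c :  X(c) = T_delta(lambda_{delta+c}) v. *)
Definition left_inv_field (v : ser) (X : ser -> ser) : Prop :=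
  forall c, dirderiv (gmul c) szero v (X c).

(* l is the bracket [X_c, X_d] of the left-invariant vector fields evaluated at
   delta, with [X,Y](p) = dY(p)(X(p)) - dX(p)(Y(p)). *)
Definition lie_bracket_at_delta (c d l : ser) : Prop :=
  exists Xc Xd, left_inv_field c Xc /\ left_inv_field d Xd /\
  exists a b, dirderiv Xd szero (Xc szero) a /\
              dirderiv Xc szero (Xd szero) b /\ l = ssub a b.

End Series.

From Pilot Require Import Defs.
From mathcomp Require Import all_boot all_algebra.
From mathcomp Require Import all_classical topology normedtype derive.
Set Implicit Arguments. Unset Strict Implicit.
Import GRing.Theory.
Import numFieldNormedType.Exports.
Local Open Scope ring_scope.
Local Open Scope classical_set_scope.

(** The coefficients of [gmul c (t v)], of [phi (t d) eta 1] and of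
[prelie (t c) d] are finite sums of products of coefficients, polynomial in
[t], so they can be differentiated at [t = 0] term by term with the product
rule.  This identifies the left-invariant vector field generated by [v] as
[X_v(c) = v + c <| v], whose derivative at [delta] in the direction [c] is
[c <| v]; hence the bracket [c <| d - d <| c].  The one step that is not
formal is the derivative of [phi (t d) (x_a eta) 1]: its shuffle part
[x_0 (d[a] ⧢ eta)] has to be matched with the term [x_0 (eta ⧢ d[a])] of
[(x_a eta) <| d], which is where commutativity of the shuffle enters. *)

Section Derivatives.
Variable K : numFieldType.

Lemma is_derive_big (V W : normedModType K) (I : Type) (r : seq I)
    (P : pred I) (F : I -> V -> W) (dF : I -> W) (x v : V) :
  (forall i, P i -> is_derive x v (F i) (dF i)) ->
  is_derive x v (fun t => \sum_(i <- r | P i) F i t) (\sum_(i <- r | P i) dF i).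
Proof.
move=> FdF; rewrite -fct_sumE; elim: r => [|i r IHr].
  by rewrite !big_nil; exact: is_derive_cst.
rewrite !big_cons; case Pi: (P i) => //; exact: is_deriveD (FdF i Pi) IHr.
Qed.

Lemma is_deriveMr (V : normedModType K) (f : V -> K) (c : K) (x v : V)
    (df : K) :
  is_derive x v f df -> is_derive x v (fun t => f t * c) (df * c).
Proof.
move=> fdf; have := is_deriveM fdf (is_derive_cst c x v).
by move/is_derive_eq; apply; rewrite scaler0 add0r [_ *: _]mulrC.
Qed.

Lemma is_derive_affine (a b x v : K) :
  is_derive x v (fun t => a + t * b) (v * b).
Proof.
have := is_deriveD (is_derive_cst a x v) (is_deriveMr b (is_derive_id x v)).
by move/is_derive_eq; apply; rewrite add0r.
Qed.

Lemma is_derive_difference_quotient (g : K -> K) (l : K) :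
  is_derive (0 : K) (1 : K) g l -> (fun t => (g t - g 0) / t) @ 0^' --> l.
Proof.
case=> dg <-; set q := (fun t => _ / t).
suff -> : q = (fun h => h^-1 *: ((g \o shift 0) (h *: 1) - g 0)) by [].
by apply/funext => t; rewrite /q /= addr0 [_%:A]mulr1 mulrC.
Qed.

End Derivatives.

Section ShuffleWithWord.
Variables (K : numFieldType) (m : nat).
Local Notation T := 'I_m.+1.
Local Notation word := (word m).
Local Notation sser := (sser K m).

Lemma shw_nil_r (u : word) : shw u [::] = [:: u].
Proof. by case: u. Qed.

Lemma perm_shwC (u v : word) : perm_eq (shw u v) (shw v u).
Proof.
move: {2}(size u + size v)%N (leqnn (size u + size v)%N) => n.
elim: n u v => [|n IHn] [|a u] [|b v] //=; rewrite ?shw_nil_r // => uvn.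
rewrite -/(shw (a :: u) v) -/(shw (b :: v) u) perm_catC.
by apply: perm_cat; apply: perm_map; apply: IHn; move: uvn;
  rewrite /= ?addnS ?addSn !ltnS // => /ltnW.
Qed.

Lemma sum_tuple_eq_word j (e : word) (G : word -> K) :
  \sum_(v : j.-tuple T) (val v == e)%:R * G v = if size e == j then G e else 0.
Proof.
case: eqP => [<-|ne].
  rewrite (bigD1 (in_tuple e)) //= eqxx mul1r big1 ?addr0 // => v ve.
  have /negPf-> : val v != e by apply: contraNneq ve => ve; apply/eqP/val_inj.
  by rewrite mul0r.
rewrite big1 // => v _.
have /negPf-> : val v != e.
  by apply/eqP => ve; apply: ne; rewrite -ve size_tuple.
by rewrite mul0r.
Qed.

Lemma shuffle_wserl (b : sser) (e w : word) :
  shuffle (wser K e) b w = if (size e <= size w)%N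
    then \sum_(v : (size w - size e).-tuple T) b v * (count_mem w (shw e v))%:R
    else 0.
Proof.
pose G u k := \sum_(v : (size w - k).-tuple T) b v * (count_mem w (shw u v))%:R.
transitivity (\sum_(k < (size w).+1 | k == size e :> nat) G e k).
  rewrite big_mkcond /=; apply: eq_bigr => k _.
  rewrite eq_sym -(sum_tuple_eq_word k e (G^~ k)); apply: eq_bigr => u _.
  by rewrite mulr_sumr; apply: eq_bigr => v _; rewrite mulrA.
by rewrite big_ord1_eq ltnS.
Qed.

Lemma shuffle_wserr (a : sser) (e w : word) :
  shuffle a (wser K e) w = if (size e <= size w)%N
    then \sum_(u : (size w - size e).-tuple T) a u * (count_mem w (shw u e))%:R
    else 0.
Proof.
pose G k := \sum_(u : k.-tuple T) a u * (count_mem w (shw u e))%:R.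
have pick_e k : \sum_(u : k.-tuple T) \sum_(v : (size w - k).-tuple T)
    a u * wser K e v * (count_mem w (shw u v))%:R
    = if size e == (size w - k)%N then G k else 0.
  under eq_bigr => u _ do under eq_bigr => v _ do rewrite mulrAC mulrC.
  under eq_bigr => u _ do
    rewrite (sum_tuple_eq_word _ e (fun v => a u * (count_mem w (shw u v))%:R)).
  by case: eqP => _; last rewrite big1.
rewrite /shuffle; under eq_bigr => k _ do rewrite pick_e.
(* Truncated subtraction: [size e = size w - k] has a solution [k <= size w]
   only when [size e <= size w]. *)
case: leqP => [le | gt]; last first.
  by apply: big1 => k _; rewrite gtn_eqF // (leq_ltn_trans (leq_subr _ _) gt).
rewrite -big_mkcond (eq_bigl (fun k : 'I__ => k == size w - size e :> nat)%N).
  by rewrite big_ord1_eq ltnS leq_subr.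
move=> k /=; have := ltn_ord k; rewrite ltnS => kw.
by apply/eqP/eqP => ->; rewrite subKn.
Qed.

Lemma shuffle_wserC (a : sser) (e : word) :
  shuffle a (wser K e) = shuffle (wser K e) a.
Proof.
apply/funext => w; rewrite shuffle_wserl shuffle_wserr; case: ifP => // _.
by apply: eq_bigr => u _; rewrite (permP (perm_shwC _ _)).
Qed.

Lemma shuffle0l (b : sser) (w : word) : shuffle (fun _ => 0) b w = 0.
Proof. by do 3!(apply: big1 => ? _); rewrite !mul0r. Qed.

Lemma is_derive_shuffle (V : normedModType K) (a b : V -> sser) (da db : sser)
    (x v : V) (w : word) :
  (forall u, is_derive x v (fun t => a t u) (da u)) ->
  (forall u, is_derive x v (fun t => b t u) (db u)) ->
  is_derive x v (fun t => shuffle (a t) (b t) w)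
    (shuffle da (b x) w + shuffle (a x) db w).
Proof.
move=> ada bdb; rewrite /shuffle -big_split; apply: is_derive_big => k _.
rewrite -big_split; apply: is_derive_big => p _.
rewrite -big_split; apply: is_derive_big => q _ /=.
apply: is_derive_eq (is_deriveMr _ (is_deriveM (ada p) (bdb q))) _.
by rewrite -mulrDl addrC; congr ((_ + _) * _); exact: mulrC.
Qed.

End ShuffleWithWord.

Section LeftInvariantFields.
Variables (K : numFieldType) (m : nat).
Local Notation word := (word m).
Local Notation ser := (ser K m).
Local Notation szero := (@szero K m).
Local Notation sone := (@sone K m).
Local Notation line v t := (sadd szero (sscale t v)).
(* [derive] exports a lemma [dcomp] that shadows the series [dcomp]. *)
Local Notation dcomp := Defs.dcomp.

Lemma sadd_sscale0 (x v : ser) : sadd x (sscale 0 v) = x.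
Proof.
by apply/funext => w; apply/funext => i; rewrite /sadd /sscale mul0r addr0.
Qed.

Lemma dirderiv_is_derive (F : ser -> ser) (x v l : ser) :
  (forall w i, is_derive (0 : K) (1 : K)
     (fun t => F (sadd x (sscale t v)) w i) (l w i)) ->
  dirderiv F x v l.
Proof.
move=> Fl w i; have := is_derive_difference_quotient (Fl w i).
by rewrite sadd_sscale0.
Qed.

Lemma dirderiv_unique (F : ser -> ser) (x v l l' : ser) :
  dirderiv F x v l -> dirderiv F x v l' -> l = l'.
Proof.
move=> Fl Fl'; apply/funext => w; apply/funext => i.
exact: cvg_unique (Fl w i) (Fl' w i).
Qed.

Lemma is_derive_sadd_sscale (x v : ser) w i :
  is_derive (0 : K) (1 : K) (fun t => sadd x (sscale t v) w i) (v w i).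
Proof. exact: is_derive_eq (is_derive_affine _ _ _ _) (mul1r _). Qed.

Lemma is_derive_sumwords (V : normedModType K) n (F : word -> V -> K)
    (dF : word -> K) (x v : V) :
  (forall eta, is_derive x v (F eta) (dF eta)) ->
  is_derive x v (fun t => sumwords n (F^~ t)) (sumwords n dF).
Proof. by move=> FdF; do 2!apply: is_derive_big => ? _. Qed.

Lemma dcomp_szero a : dcomp szero a = fun _ => 0.
Proof. by apply/funext => u; rewrite /dcomp; case: unlift. Qed.

Lemma phi_szero (eta : word) : phi szero eta sone = wser K eta.
Proof.
apply/funext; elim: eta => [|a eta IHeta] [|b w] //=.
  by rewrite /phi_letter /ssadd /= addr0.
rewrite /phi_letter /ssadd /= IHeta dcomp_szero shuffle0l if_same addr0 /wser.
by rewrite eqseq_cons; case: (b == a).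
Qed.

Lemma is_derive_dcomp (d : ser) a u :
  is_derive (0 : K) (1 : K) (fun t => dcomp (line d t) a u) (dcomp d a u).
Proof.
rewrite /dcomp; case: unlift => [i|]; last exact: is_derive_cst.
exact: is_derive_sadd_sscale.
Qed.

Lemma is_derive_phi (d : ser) (eta : word) w :
  is_derive (0 : K) (1 : K) (fun t => phi (line d t) eta sone w)
    (wprelie d eta w).
Proof.
elim: eta w => [|a eta IHeta] w /=; first exact: is_derive_cst.
rewrite /phi_letter /ssadd /pre.
apply: is_deriveD; case: w => [|b w] /=; try exact: is_derive_cst.
  by case: (b == a); [exact: IHeta | exact: is_derive_cst].
case: (b == x0 m); last exact: is_derive_cst.
apply: is_derive_eq; first exact: is_derive_shuffle (is_derive_dcomp d a) IHeta.
by rewrite /= sadd_sscale0 phi_szero dcomp_szero shuffle0l addr0 shuffle_wserC.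
Qed.

Definition linv_field (v : ser) : ser -> ser := fun c => sadd v (prelie c v).

Lemma left_inv_field_linv (v : ser) : left_inv_field v (linv_field v).
Proof.
move=> c; apply: dirderiv_is_derive => w i.
apply: is_deriveD; first exact: is_derive_sadd_sscale.
by apply: is_derive_sumwords => eta; apply: is_deriveZ; exact: is_derive_phi.
Qed.

Lemma left_inv_fieldE (v : ser) (X : ser -> ser) :
  left_inv_field v X -> X = linv_field v.
Proof.
move=> Xv; apply/funext => c.
exact: dirderiv_unique (Xv c) (@left_inv_field_linv v c).
Qed.

Lemma linv_field_szero (v : ser) : linv_field v szero = v.
Proof.
apply/funext => w; apply/funext => i.
rewrite /linv_field /sadd /prelie /sumwords big1 ?addr0 // => k _.
by rewrite big1 // => u _; rewrite mul0r.
Qed.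

Lemma dirderiv_linv_field (c d : ser) :
  dirderiv (linv_field d) szero c (prelie c d).
Proof.
apply: dirderiv_is_derive => w i.
rewrite -[prelie c d w i]add0r /linv_field {1}/sadd; apply: is_deriveD.
apply: is_derive_sumwords => eta; apply: is_deriveMr.
exact: is_derive_sadd_sscale.
Qed.

End LeftInvariantFields.

Theorem proposition5p5 (K : numFieldType) (m : nat) (c d : ser K m) :
  forall l : ser K m,
    lie_bracket_at_delta c d l <-> l = ssub (prelie c d) (prelie d c).
Proof.
move=> l; split.
  move=> [_ [_ [/left_inv_fieldE -> [/left_inv_fieldE -> [a [b]]]]]].
  rewrite !linv_field_szero => -[cd [dc ->]].
  by rewrite (dirderiv_unique cd (@dirderiv_linv_field _ _ c d))
             (dirderiv_unique dc (@dirderiv_linv_field _ _ d c)).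
move=> ->; exists (linv_field c), (linv_field d).
split; first exact: left_inv_field_linv.
split; first exact: left_inv_field_linv.
exists (prelie c d), (prelie d c); rewrite !linv_field_szero.
split; first exact: dirderiv_linv_field.
by split; first exact: dirderiv_linv_field.
Qed.
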